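(* Fix an integer $a\ge 2$ and an integer $k\ge 2$. Let $n\to\infty$ and let $m=m(n)=o\!\left(n^{1+1/k}\right)$. Then all hypergraphs $H\in\mathcal{H}(a,n,m)$, except for $o\!\left(\binom{\binom{n}{a}}{m}\right)$ of them, contain at most $n$ Berge-cycles of length at most $k$.
   Context: $\mathcal{H}(a,n,m)$ is the family of all $a$-uniform hypergraphs on vertex set $[n]$ with exactly $m$ hyperedges; $|\mathcal{H}(a,n,m)|=\binom{\binom{n}{a}}{m}$. A Berge-cycle of length $l\ge 2$ consists of $l$ distinct hyperedges $e_1,\dots,e_l$ and $l$ distinct vertices $v_1,\dots,v_l$ with $v_i\in e_i\cap e_{i+1}$ for $i=1,\dots,l$ (indices modulo $l$). *)

From mathcomp Require Import all_boot.
Set Implicit Arguments. Unset Strict Implicit. Unset Printing Implicit Defensive.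

Definition in_Hanm (a n m : nat) (H : {set {set 'I_n}}) : bool :=
  [forall e in H, #|e| == a] && (#|H| == m).

Definition berge_cycle (n l : nat) (H : {set {set 'I_n}})
    (c : (l.-tuple {set 'I_n} * l.-tuple 'I_n)%type) : bool :=
  [&& uniq c.1, uniq c.2, all (fun e => e \in H) c.1 &
      [forall i : 'I_l, (tnth c.2 i \in tnth c.1 i) && (tnth c.2 i \in tnth c.1 (ordS i))]].

(* Number of Berge-cycles of length l in H (counted as pairs of sequences). *)
Definition num_berge (n l : nat) (H : {set {set 'I_n}}) : nat :=
  #|[set c : (l.-tuple {set 'I_n} * l.-tuple 'I_n)%type | berge_cycle H c]|.

Definition num_short_berge (n k : nat) (H : {set {set 'I_n}}) : nat :=
  \sum_(2 <= l < k.+1) num_berge l H.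

Definition num_bad (a k n m : nat) : nat :=
  #|[set H : {set {set 'I_n}} | in_Hanm a m H && (n < num_short_berge k H)]|.

From mathcomp Require Import all_boot zify.
Set Implicit Arguments. Unset Strict Implicit. Unset Printing Implicit Defensive.

(* First moment method. Write N = C(n, a). A Berge l-cycle of the complete a-graph is
   determined by its l vertices and the a - 2 other points of each edge, so there are at
   most n^l C(n, a-2)^l of them, and each lies in C(N-l, m-l) <= C(N, m) (m/N)^l of the
   graphs in H(a, n, m). Since C(n, a-2) n^2 <= 4a(a-1) N, the average number of Berge
   l-cycles is at most (4a(a-1) m / n)^l, which is at most n/(dk) for every l <= k as soon
   as it is so for l = 0 and l = k, i.e. when dk <= n and dk (4a(a-1))^k m^k <= n^(k+1).
   Markov's inequality then leaves at most C(N, m)/d graphs with more than n short Berge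
   cycles. *)

Local Notation berge_data n l := (l.-tuple {set 'I_n} * l.-tuple 'I_n)%type.

Lemma bin_sub_exp_le (N M l : nat) : l <= M -> M <= N ->
  'C(N - l, M - l) * N ^ l <= 'C(N, M) * M ^ l.
Proof.
move=> + le_MN; elim: l => [|l IHl] lt_lM; first by rewrite !subn0.
have pascal : (N - l) * 'C(N - l.+1, M - l.+1) = (M - l) * 'C(N - l, M - l).
  have e1 : (N - l).-1 = N - l.+1 by lia.
  have e2 : (M - l.+1).+1 = M - l by lia.
  by have := mul_bin_diag (N - l) (M - l.+1); rewrite e1 e2.
have {IHl} := IHl (ltnW lt_lM); move: pascal; rewrite !expnS.
move: 'C(N - l.+1, _) 'C(N - l, _) => C' C pascal IHl.
have step : C' * N <= C * M.
  rewrite -(@leq_pmul2r (M - l)); last lia.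
  have : N * (M - l) <= M * (N - l) by nia.
  nia.
nia.
Qed.

Lemma draws_supset_card_le (T : finType) (A S : {set T}) (k : nat) :
  S \subset A ->
  #|[set B : {set T} | [&& B \subset A, S \subset B & #|B| == k]]| * #|A| ^ #|S|
    <= 'C(#|A|, k) * k ^ #|S|.
Proof.
move=> sSA; set F := [set B | _].
have [->|[B0 FB0]] := set_0Vmem F; first by rewrite cards0.
move: FB0; rewrite inE => /and3P[sB0A sSB0 /eqP cardB0].
have le_Sk : #|S| <= k by rewrite -cardB0 subset_leq_card.
have le_kA : k <= #|A| by rewrite -cardB0 subset_leq_card.
apply: leq_trans (bin_sub_exp_le le_Sk le_kA); rewrite leq_mul2r; apply/orP; right.
have diffS_inj : {in F &, injective (fun B => B :\: S)}.
  move=> B1 B2; rewrite !inE => /and3P[_ sSB1 _] /and3P[_ sSB2 _] eqB.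
  by rewrite -(setID B1 S) -(setID B2 S) (setIidPr sSB1) (setIidPr sSB2) eqB.
have cardAS : #|A :\: S| = #|A| - #|S| by rewrite cardsD (setIidPr sSA).
rewrite -(card_in_imset diffS_inj) -cardAS -cards_draws.
apply/subset_leq_card/subsetP => _ /imsetP[B /[!inE] /and3P[sBA sSB /eqP <-] ->].
by rewrite setSD //= cardsD (setIidPr sSB).
Qed.

Definition complete_hgraph (a n : nat) : {set {set 'I_n}} := [set e : {set 'I_n} | #|e| == a].

Lemma card_complete_hgraph (a n : nat) : #|complete_hgraph a n| = 'C(n, a).
Proof. by rewrite card_draws card_ord. Qed.

Lemma in_HanmE (a n M : nat) (H : {set {set 'I_n}}) :
  in_Hanm a M H = (H \subset complete_hgraph a n) && (#|H| == M).
Proof.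
congr andb; apply/forall_inP/subsetP => sizeH e /sizeH; last by rewrite inE.
by move=> /eqP sz_e; rewrite inE sz_e.
Qed.

Lemma berge_cycle_edgesE (n l : nat) (H H' : {set {set 'I_n}}) (c : berge_data n l) :
  berge_cycle H' c -> berge_cycle H c = ([set e in (c.1 : seq _)] \subset H).
Proof.
case/and4P=> uniq_e uniq_v _ incident; rewrite /berge_cycle uniq_e uniq_v incident andbT.
apply/allP/subsetP => edgesH e; first by rewrite inE => /edgesH.
by move=> ce; apply: edgesH; rewrite inE.
Qed.

Lemma berge_cycleS (n l : nat) (H H' : {set {set 'I_n}}) (c : berge_data n l) :
  H \subset H' -> berge_cycle H c -> berge_cycle H' c.
Proof.
move=> sHH' cycleH; rewrite (berge_cycle_edgesE H' cycleH).
by apply: subset_trans sHH'; rewrite -(berge_cycle_edgesE H cycleH).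
Qed.

Lemma ord_pred_neq (l : nat) (i : 'I_l) : 1 < l -> ord_pred i != i.
Proof.
move=> lt1l; apply/eqP => /(congr1 val) /=; case: i => [[|i] lt_il] /=.
  by rewrite add0n modn_small; lia.
by rewrite modnDr modn_small; lia.
Qed.

Lemma card_berge_cycle_complete_le (a n l : nat) : 1 < l ->
  #|[set c : berge_data n l | berge_cycle (complete_hgraph a n) c]|
    <= n ^ l * 'C(n, a - 2) ^ l.
Proof.
move=> lt1l; set G := [set c | _].
pose ends (c : berge_data n l) i := [set tnth c.2 (ord_pred i); tnth c.2 i].
have ends_sub c i : c \in G -> ends c i \subset tnth c.1 i.
  rewrite inE => /and4P[_ _ _ /forallP incident].
  have /andP[v_i _] := incident i; have /andP[_] := incident (ord_pred i).
  by rewrite ord_predK => v_pi; apply/subsetP => x /[!inE] /orP[] /eqP ->.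
pose code c := ([ffun i => tnth c.2 i], [ffun i => tnth c.1 i :\: ends c i]).
have code_inj : {in G &, injective code}.
  move=> [e1 v1] [e2 v2] Gc1 Gc2 [/ffunP eq_v /ffunP eq_e].
  have {}eq_v : v1 = v2 by apply: eq_from_tnth => i; have := eq_v i; rewrite !ffunE.
  subst v2; congr pair; apply: eq_from_tnth => i; have := eq_e i; rewrite !ffunE => eq_ei.
  rewrite -(setID (tnth e1 i) (ends (e1, v1) i)) -(setID (tnth e2 i) (ends (e2, v1) i)).
  by rewrite (setIidPr (ends_sub _ i Gc1)) (setIidPr (ends_sub _ i Gc2)) eq_ei.
rewrite -(card_in_imset code_inj).
have -> : n ^ l * 'C(n, a - 2) ^ l =
    #|setX [set: {ffun 'I_l -> 'I_n}]
           [set f : {ffun 'I_l -> {set 'I_n}} | f \in ffun_on (complete_hgraph (a - 2) n)]|.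
  by rewrite cardsX cardsT card_ffun cardsE card_ffun_on card_complete_hgraph !card_ord.
apply/subset_leq_card/subsetP => _ /imsetP[c Gc ->].
rewrite !inE /=; apply/ffun_onP => i; rewrite ffunE inE cardsD (setIidPr (ends_sub _ i Gc)).
move: Gc; rewrite inE => /and4P[_ uniq_v /allP sizes _].
have := sizes _ (mem_tnth i c.1); rewrite inE => /eqP ->.
by rewrite cards2 (inj_eq (tuple_uniqP _ uniq_v)) ord_pred_neq.
Qed.

Lemma sum_num_bergeE (n l : nat) (P : pred {set {set 'I_n}}) :
  \sum_(H | P H) num_berge l H =
  \sum_(c : berge_data n l) #|[set H | P H && berge_cycle H c]|.
Proof.
under eq_bigr do rewrite /num_berge -sum1dep_card.
by rewrite (exchange_big_dep xpredT) //=; under eq_bigr do rewrite sum1dep_card.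
Qed.

Lemma card_Hanm_berge_le (a n M l : nat) (c : berge_data n l) :
  berge_cycle (complete_hgraph a n) c ->
  #|[set H | in_Hanm a M H && berge_cycle H c]| * 'C(n, a) ^ l <= 'C('C(n, a), M) * M ^ l.
Proof.
move=> cycle_c; set S := [set e in (c.1 : seq _)].
have cardS : #|S| = l.
  by case/and4P: cycle_c => uniq_e _ _ _; rewrite cardsE (card_uniqP uniq_e) size_tuple.
have sSK : S \subset complete_hgraph a n by rewrite -(berge_cycle_edgesE _ cycle_c).
have -> : [set H | in_Hanm a M H && berge_cycle H c] =
    [set H : {set {set 'I_n}} | [&& H \subset complete_hgraph a n, S \subset H & #|H| == M]].
  by apply/setP => H; rewrite !inE in_HanmE (berge_cycle_edgesE _ cycle_c) andbAC andbA.
by rewrite -cardS -card_complete_hgraph draws_supset_card_le.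
Qed.

Definition total_num_berge (a n M l : nat) : nat :=
  \sum_(H : {set {set 'I_n}} | in_Hanm a M H) num_berge l H.

Lemma total_num_berge_le (a n M l : nat) :
  total_num_berge a n M l * 'C(n, a) ^ l <=
  #|[set c : berge_data n l | berge_cycle (complete_hgraph a n) c]| * ('C('C(n, a), M) * M ^ l).
Proof.
rewrite /total_num_berge sum_num_bergeE big_distrl -sum_nat_cond_const.
rewrite [X in _ <= X]big_mkcond /=.
apply: leq_sum => c _; case: ifP => [|not_cycle]; first exact: card_Hanm_berge_le.
suff -> : [set H | in_Hanm a M H && berge_cycle H c] = set0 by rewrite cards0.
apply/setP => H; rewrite !inE in_HanmE; apply/negP => /andP[/andP[sHK _] cycleH].
by rewrite (berge_cycleS sHK cycleH) in not_cycle.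
Qed.

Lemma bin_subn2_le (n a : nat) : 2 <= a -> 2 * a <= n ->
  'C(n, a - 2) * n ^ 2 <= 4 * (a * (a - 1)) * 'C(n, a).
Proof.
case: a => [|[|b]] // _ le_n; rewrite subn2 subn1 /=.
have pascal1 := mul_bin_left n b; have pascal2 := mul_bin_left n b.+1.
have pascal : 'C(n, b) * ((n - b) * (n - b.+1)) = 'C(n, b.+2) * (b.+2 * b.+1) by nia.
have : n ^ 2 <= 4 * ((n - b) * (n - b.+1)) by nia.
nia.
Qed.

Lemma total_num_berge_exp_le (a n M l : nat) : 2 <= a -> 1 < l -> 2 * a <= n ->
  total_num_berge a n M l * n ^ l
    <= 'C('C(n, a), M) * (4 * (a * (a - 1)) * M) ^ l.
Proof.
move=> le2a lt1l le_n; set S := total_num_berge a n M l.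
set N := 'C(n, a); set K := 'C(n, a - 2); set C := 'C(N, M); set A := 4 * (a * (a - 1)).
have count : S * N ^ l <= n ^ l * K ^ l * (C * M ^ l).
  exact: leq_trans (total_num_berge_le a n M l) (leq_mul (card_berge_cycle_complete_le a n lt1l) _).
have ratio : K ^ l * (n ^ l * n ^ l) <= A ^ l * N ^ l.
  by rewrite -!expnMn leq_exp2r ?(ltnW lt1l) // mulnn; apply: bin_subn2_le.
have N_gt0 : 0 < N ^ l * n ^ l by rewrite muln_gt0 !expn_gt0 bin_gt0; lia.
rewrite expnMn -(leq_pmul2r N_gt0).
have := leq_mul count (leqnn (n ^ l * n ^ l)); have := leq_mul ratio (leqnn (n ^ l * C * M ^ l)).
nia.
Qed.

(* Log-convexity in [l]: the hypotheses are the cases [l = 0] and [l = k]. *)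
Lemma exp_interpolate (D x n k l : nat) : l <= k -> D <= n ->
  D * x ^ k <= n ^ k.+1 -> D * x ^ l <= n ^ l.+1.
Proof.
case: l => [|l] le_lk le_Dn le_k; first by rewrite muln1 expn1.
have [le_xn | lt_nx] := leqP x n.
  by rewrite (expnS n) leq_mul ?leq_exp2r.
have [-> | D_gt0] := posnP D; first by rewrite mul0n.
have gap : n ^ (k - l.+1) <= x ^ (k - l.+1).
  by case: (posnP (k - l.+1)) => [-> // | kl_gt0]; rewrite leq_exp2r // ltnW.
rewrite -(@leq_pmul2r (n ^ (k - l.+1))) ?expn_gt0 ?(leq_trans D_gt0 le_Dn) //.
rewrite -expnD (_ : l.+2 + _ = k.+1); last lia.
apply: leq_trans le_k; rewrite -mulnA leq_mul //.
by rewrite -{2}(subnKC le_lk) expnD leq_mul.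
Qed.

Lemma num_bad_markov (a k n M : nat) :
  num_bad a k n M * n.+1 <= \sum_(2 <= l < k.+1) total_num_berge a n M l.
Proof.
have -> : \sum_(2 <= l < k.+1) total_num_berge a n M l =
    \sum_(H : {set {set 'I_n}} | in_Hanm a M H) num_short_berge k H.
  by rewrite exchange_big.
rewrite /num_bad -sum_nat_cond_const big_mkcondr /=.
by apply: leq_sum => H _; case: ltnP.
Qed.

Lemma num_bad_mul_le (a k n M D : nat) : 2 <= a -> 2 * a <= n -> D <= n ->
  D * (4 * (a * (a - 1)) * M) ^ k <= n ^ k.+1 ->
  num_bad a k n M * D <= k.-1 * 'C('C(n, a), M).
Proof.
move=> le2a le_n le_Dn le_k.
have per_length l : 2 <= l <= k ->
    total_num_berge a n M l * D <= 'C('C(n, a), M) * n.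
  case/andP=> le2l le_lk; have n_gt0 : 0 < n ^ l by rewrite expn_gt0; lia.
  rewrite -(leq_pmul2r n_gt0).
  have est := leq_mul (total_num_berge_exp_le M le2a le2l le_n) (leqnn D).
  have := leq_mul (leqnn 'C('C(n, a), M)) (exp_interpolate le_lk le_Dn le_k).
  move: est; rewrite (expnS n).
  move: (total_num_berge _ _ _ _) ('C(_, _)) ((_ * M) ^ l) (n ^ l) => S C X P.
  nia.
have total : (\sum_(2 <= l < k.+1) total_num_berge a n M l) * D
    <= k.-1 * ('C('C(n, a), M) * n).
  rewrite big_distrl /= (_ : k.-1 = k.+1 - 2) -?sum_nat_const_nat; last lia.
  by rewrite big_nat_cond [X in _ <= X]big_nat_cond; apply: leq_sum => l /andP[/per_length].
have := leq_trans (leq_mul (num_bad_markov a k n M) (leqnn D)) total.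
move: (num_bad _ _ _ _) ('C(_, _)) => B C.
nia.
Qed.

Theorem lemma14 (a k : nat) (m : nat -> nat) :
  2 <= a -> 2 <= k ->
  (forall d : nat, 0 < d -> exists N : nat, forall n : nat, N <= n ->
     d * (m n) ^ k <= n ^ k.+1) ->
  forall d : nat, 0 < d -> exists N : nat, forall n : nat, N <= n ->
     d * num_bad a k n (m n) <= 'C('C(n, a), m n).
Proof.
move=> le2a le2k m_small d d_gt0; set A := 4 * (a * (a - 1)).
have dkA_gt0 : 0 < d * k * A ^ k by rewrite !muln_gt0 expn_gt0; lia.
have [N m_smallN] := m_small _ dkA_gt0.
exists (N + d * k + 2 * a) => n le_n.
have bound : num_bad a k n (m n) * (d * k) <= k.-1 * 'C('C(n, a), m n).
  apply: num_bad_mul_le => //; [lia | lia |].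
  by rewrite expnMn mulnA m_smallN //; lia.
rewrite -(@leq_pmul2l k) ?(ltnW le2k) //.
apply: leq_trans (leq_trans _ bound) (leq_mul (leq_pred k) (leqnn _)).
by rewrite mulnC mulnAC mulnC.
Qed.
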